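(* For every integer $k\ge 2$, no graph $G\in\mathcal{H}_k$ contains $K_{2,k+2}$ as a minor.
   Context: All graphs are finite; parallel edges are allowed, loops are not. A length-function on a graph $G$ is a map $\ell:E(G)\to\mathbb{R}^+$ (strictly positive reals); $\ell(H)=\sum_{e\in E(H)}\ell(e)$ for subgraphs $H$, which carry the restricted length-function. $\mathrm{sd}_G(A)$ is the minimum of $\ell(S)$ over connected subgraphs $S\subseteq G$ with $A\subseteq V(S)$ ($\infty$ if none). $H\subseteq G$ is $k$-geodesic in $G$ if $\mathrm{sd}_H(A)=\mathrm{sd}_G(A)$ for all $A\subseteq V(H)$ with $|A|\le k$, and fully geodesic if it is $k$-geodesic for all $k$. For $k\ge2$, $\mathcal{H}_k$ is the class of all graphs $H$ such that for every graph $G\supseteq H$ and every length-function on $G$ for which $H$ is $k$-geodesic in $G$, $H$ is fully geodesic in $G$. *)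

From mathcomp Require Import all_boot.
From Stdlib Require Import Reals.
Set Implicit Arguments. Unset Strict Implicit. Unset Printing Implicit Defensive.

(* A finite multigraph: vertices 'I_(nv G); edges form a list of endpoint pairs,
   edge number i being the i-th entry (so parallel edges are allowed).
   Loops are excluded by the predicate [loopless]. Edges are undirected: the
   order of the two endpoints in a pair is irrelevant everywhere below. *)
Record graph := Graph { nv : nat; edges : seq ('I_nv * 'I_nv) }.

Definition eidx (G : graph) := 'I_(size (edges G)).

Definition edge_at (G : graph) (e : eidx G) : 'I_(nv G) * 'I_(nv G) :=
  tnth (in_tuple (edges G)) e.

Definition loopless (G : graph) : bool := all (fun p => p.1 != p.2) (edges G).

Definition is_subgraph (G : graph) (VS : {set 'I_(nv G)}) (ES : {set eidx G}) : bool :=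
  [forall e in ES, ((edge_at e).1 \in VS) && ((edge_at e).2 \in VS)].

Definition sub_adj (G : graph) (ES : {set eidx G}) : rel 'I_(nv G) :=
  fun x y => [exists e in ES, (edge_at e == (x, y)) || (edge_at e == (y, x))].

Definition connectedb (G : graph) (VS : {set 'I_(nv G)}) (ES : {set eidx G}) : bool :=
  (VS != set0) && [forall x in VS, forall y in VS, connect (sub_adj ES) x y].

Definition sub_len (G : graph) (l : eidx G -> R) (ES : {set eidx G}) : R :=
  \big[Rplus/0%R]_(e in ES) l e.

(* sd_G(A): minimum length of a connected subgraph containing A;
   None encodes +infinity (no such subgraph). *)
Definition sd (G : graph) (l : eidx G -> R) (A : {set 'I_(nv G)}) : option R :=
  foldr (fun (S : {set 'I_(nv G)} * {set eidx G}) acc =>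
           if [&& is_subgraph S.1 S.2, connectedb S.1 S.2 & A \subset S.1]
           then Some (match acc with
                      | None => sub_len l S.2
                      | Some d => Rmin (sub_len l S.2) d end)
           else acc)
        None (enum [set: {set 'I_(nv G)} * {set eidx G}]).

(* H is a subgraph of G, presented as an embedding (injective on vertices and
   on edges, preserving incidence). *)
Record embedding (H G : graph) := Embedding {
  vmap : 'I_(nv H) -> 'I_(nv G);
  emap : eidx H -> eidx G;
  vmap_inj : injective vmap;
  emap_inj : injective emap;
  emap_ends : forall e : eidx H,
    edge_at (emap e) = (vmap (edge_at e).1, vmap (edge_at e).2) \/
    edge_at (emap e) = (vmap (edge_at e).2, vmap (edge_at e).1) }.

Definition k_geodesic (H G : graph) (phi : embedding H G) (l : eidx G -> R) (k : nat) : Prop :=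
  forall A : {set 'I_(nv H)}, #|A| <= k ->
    sd (fun e => l (emap phi e)) A = sd l (vmap phi @: A).

Definition fully_geodesic (H G : graph) (phi : embedding H G) (l : eidx G -> R) : Prop :=
  forall k : nat, k_geodesic phi l k.

Definition in_Hk (k : nat) (H : graph) : Prop :=
  forall (G : graph) (phi : embedding H G) (l : eidx G -> R),
    loopless G -> (forall e, (0 < l e)%R) ->
    k_geodesic phi l k -> fully_geodesic phi l.

(* X (a simple graph on a finType given by a symmetric relation) is a minor of H:
   there are pairwise disjoint, nonempty, connected branch sets B x (x in X)
   and, for each edge xy of X, an edge of H between B x and B y. *)
Definition induced_edges (G : graph) (B : {set 'I_(nv G)}) : {set eidx G} :=
  [set e : eidx G | ((edge_at e).1 \in B) && ((edge_at e).2 \in B)].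

Definition has_minor (X : finType) (adj : rel X) (H : graph) : Prop :=
  exists B : X -> {set 'I_(nv H)},
    (forall x, connectedb (B x) (induced_edges (B x))) /\
    (forall x y, x != y -> [disjoint B x & B y]) /\
    (forall x y, adj x y -> exists e : eidx H,
        ((edge_at e).1 \in B x /\ (edge_at e).2 \in B y) \/
        ((edge_at e).1 \in B y /\ (edge_at e).2 \in B x)).

Definition K2_adj (m : nat) : rel ('I_2 + 'I_m)%type :=
  fun u v => match u, v with
             | inl _, inr _ | inr _, inl _ => true
             | _, _ => false end.

(* Let [B] be the branch sets of a K_{2,k+2} minor of [H], with hubs 0, 1 and leaves
   0, ..., k.  Choose a terminal [t i] in each leaf
   and a connector edge [c h i] between hub [h] and leaf [i].  Weight [H] so that the edges
   inside branch sets are negligible, [c 0 0] costs 1, the other connectors cost 3k+3 at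
   hub 0 and 3k at hub 1, and every remaining edge (including [c 1 0]) costs 3k^2+3k+1;
   then add an apex joined to [t 0] by a spoke of length 2k and to every other terminal by
   a spoke of length 3k+1.  Any at most k terminals are joined inside [H] at most as
   cheaply as through their spokes -- via hub 0 if [t 0] is among them, via hub 1
   otherwise -- so [H] is k-geodesic in this supergraph.  All k+1 terminals cost 3k^2+3k
   through the apex, whereas a connected subgraph of [H] containing them attaches every
   leaf to a hub, and either attaches all leaves to hub 0 or some leaf to both hubs;
   either way it costs at least 3k^2+3k+1.  Hence [H] is not fully geodesic. *)

From HB Require Import structures.
From mathcomp Require Import all_boot.
From Stdlib Require Import Reals Lra Lia Classical.
From mathcomp Require Import zify.
Set Implicit Arguments. Unset Strict Implicit. Unset Printing Implicit Defensive.

HB.instance Definition _ := Monoid.isComLaw.Build R 0%R Rplus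
  (fun x y z => esym (Rplus_assoc x y z)) Rplus_comm Rplus_0_l.

Section RealSums.
Variable I : finType.
Implicit Types (A B : {set I}) (F : I -> R).

Lemma sumR_ge0 (P : pred I) F :
  (forall i, P i -> 0 <= F i)%R -> (0 <= \big[Rplus/0%R]_(i | P i) F i)%R.
Proof. by move=> F0; apply: (big_ind (fun x => 0 <= x)%R) => // *; lra. Qed.

Lemma sumR_const (P : pred I) c :
  \big[Rplus/0%R]_(i in P) c = (INR #|P| * c)%R.
Proof.
rewrite big_const; elim: #|P| => [|m IH]; first by rewrite /=; lra.
by rewrite iterS IH S_INR; lra.
Qed.

Lemma sumR_subset A B F : A \subset B -> (forall i, 0 <= F i)%R ->
  (\big[Rplus/0%R]_(i in A) F i <= \big[Rplus/0%R]_(i in B) F i)%R.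
Proof.
move=> sAB F0; rewrite [X in (_ <= X)%R](@big_setID _ _ _ _ B A) /= (setIidPr sAB).
have := @sumR_ge0 (fun i => i \in B :\: A) F (fun i _ => F0 i); lra.
Qed.

Lemma sumR_ge_term A F i : i \in A -> (forall i, 0 <= F i)%R ->
  (F i <= \big[Rplus/0%R]_(j in A) F j)%R.
Proof.
move=> Ai F0; have := sumR_subset (_ : [set i] \subset A) F0.
by rewrite sub1set big_set1; apply.
Qed.

Lemma sumR_setU_disjoint A B F : [disjoint A & B] ->
  \big[Rplus/0%R]_(i in A :|: B) F i =
   (\big[Rplus/0%R]_(i in A) F i + \big[Rplus/0%R]_(i in B) F i)%R.
Proof. by move=> dAB; rewrite -bigU //; apply: eq_bigl => i; rewrite !inE. Qed.

Lemma sumR_setU_le A B F : (forall i, 0 <= F i)%R ->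
  (\big[Rplus/0%R]_(i in A :|: B) F i <=
   \big[Rplus/0%R]_(i in A) F i + \big[Rplus/0%R]_(i in B) F i)%R.
Proof.
move=> F0; rewrite (@big_setID _ _ _ _ (A :|: B) A) /= (setIidPr (subsetUl A B)).
have := sumR_subset (_ : (A :|: B) :\: A \subset B) F0.
by rewrite setDUl setDv set0U subsetDl => /(_ isT); lra.
Qed.

End RealSums.

Section SteinerDistance.
Variable G : graph.
Implicit Types (l : eidx G -> R) (A : {set 'I_(nv G)}) (S : {set 'I_(nv G)} * {set eidx G}).

Definition steiner A S := [&& is_subgraph S.1 S.2, connectedb S.1 S.2 & A \subset S.1].

Definition sd_step l A S (acc : option R) :=
  if steiner A S then Some (match acc with
                            | None => sub_len l S.2
                            | Some d => Rmin (sub_len l S.2) d end)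
  else acc.

Lemma sd_foldr l A s :
  (forall S, S \in s -> steiner A S ->
     exists2 d, foldr (sd_step l A) None s = Some d & (d <= sub_len l S.2)%R) /\
  (forall d, foldr (sd_step l A) None s = Some d ->
     exists2 S, steiner A S & d = sub_len l S.2).
Proof.
elim: s => [|S s [IH1 IH2]] /=; first by split=> // d.
rewrite {1 3}/sd_step; case: (boolP (steiner A S)) => SA; split.
- move=> S'; rewrite inE => /orP [/eqP -> _ | S's S'A].
    by case: foldr => [d|]; eexists; try reflexivity; exact: Rmin_l.
  have [d -> le_d] := IH1 S' S's S'A.
  by eexists; [reflexivity | exact: Rle_trans (Rmin_r _ _) le_d].
- move=> d [<-]; case: foldr IH2 => [d' IH2|_]; last by exists S.
  by rewrite /Rmin; case: Rle_dec => _; [exists S | exact: IH2].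
- move=> S'; rewrite inE => /orP [/eqP -> | S's S'A]; first by rewrite (negbTE SA).
  exact: IH1.
- exact: IH2.
Qed.

Lemma sd_le_steiner l A S : steiner A S ->
  exists2 d, sd l A = Some d & (d <= sub_len l S.2)%R.
Proof.
have [sdP _] := sd_foldr l A (enum setT).
by move=> SA; apply: sdP SA; rewrite mem_enum inE.
Qed.

Lemma sd_attained l A d : sd l A = Some d ->
  exists2 S, steiner A S & d = sub_len l S.2.
Proof. by have [_ sdP] := sd_foldr l A (enum setT); apply: sdP. Qed.

Lemma eq_sd_len l1 l2 A : l1 =1 l2 -> sd l1 A = sd l2 A.
Proof.
move=> l12; rewrite /sd; elim: (enum _) => //= S s ->.
by rewrite /sub_len (eq_bigr _ (fun e _ => l12 e)).
Qed.

Lemma steiner_set0 v : steiner set0 ([set v], set0).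
Proof.
apply/and3P; split; rewrite ?sub0set //.
  by apply/forallP => e; rewrite inE.
apply/andP; split; first by apply/set0Pn; exists v; rewrite inE.
apply/forall_inP => x; rewrite inE => /eqP ->.
by apply/forall_inP => y; rewrite inE => /eqP ->.
Qed.

End SteinerDistance.

Lemma eq_sd (G1 G2 : graph) (l1 : eidx G1 -> R) (l2 : eidx G2 -> R) A1 A2 :
  (forall S1, steiner A1 S1 ->
     exists2 S2, steiner A2 S2 & (sub_len l2 S2.2 <= sub_len l1 S1.2)%R) ->
  (forall S2, steiner A2 S2 ->
     exists2 S1, steiner A1 S1 & (sub_len l1 S1.2 <= sub_len l2 S2.2)%R) ->
  sd l1 A1 = sd l2 A2.
Proof.
move=> dom12 dom21.
case E1: (sd l1 A1) => [d1|]; case E2: (sd l2 A2) => [d2|] //.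
- have [S1 st1 d1E] := sd_attained E1; have [S2 st2 d2E] := sd_attained E2.
  have [S2' st2' le21] := dom12 _ st1; have [S1' st1' le12] := dom21 _ st2.
  have [e1 E1' le_e1] := sd_le_steiner l1 st1'.
  have [e2 E2' le_e2] := sd_le_steiner l2 st2'.
  move: E1' E2' le_e1 le_e2; rewrite E1 E2 => -[<-] [<-] ? ?; congr Some; lra.
- have [S1 st1 _] := sd_attained E1; have [S2 st2 _] := dom12 _ st1.
  by have [d E _] := sd_le_steiner l2 st2; rewrite E in E2.
- have [S2 st2 _] := sd_attained E2; have [S1 st1 _] := dom21 _ st2.
  by have [d E _] := sd_le_steiner l1 st1; rewrite E in E1.
Qed.

Section Connectivity.
Variable G : graph.
Implicit Types (ES : {set eidx G}) (A VS U : {set 'I_(nv G)}).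

Lemma is_subgraph_setU (V1 V2 : {set 'I_(nv G)}) (E1 E2 : {set eidx G}) :
  is_subgraph V1 E1 -> is_subgraph V2 E2 -> is_subgraph (V1 :|: V2) (E1 :|: E2).
Proof.
move=> /forall_inP sub1 /forall_inP sub2; apply/forall_inP => e.
by case/setUP => [/sub1 | /sub2] /andP [e1 e2]; rewrite !inE e1 e2 ?orbT.
Qed.

Lemma sub_adjP ES x y :
  reflect (exists2 e, e \in ES & edge_at e = (x, y) \/ edge_at e = (y, x)) (sub_adj ES x y).
Proof.
apply: (iffP exists_inP) => [[e eE /orP [] /eqP ends] | [e eE [] ends]];
  by exists e; rewrite ?ends ?eqxx ?orbT //; tauto.
Qed.

Lemma sub_adj_sym ES : symmetric (sub_adj ES).
Proof. by move=> x y; apply/sub_adjP/sub_adjP => -[e eE ?]; exists e => //; tauto. Qed.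

Lemma connect_sub_adjC ES x y : connect (sub_adj ES) x y = connect (sub_adj ES) y x.
Proof. exact/sym_connect_sym/sub_adj_sym. Qed.

Lemma sub_adj_connect_mono ES1 ES2 x y : ES1 \subset ES2 ->
  connect (sub_adj ES1) x y -> connect (sub_adj ES2) x y.
Proof.
move=> sE; apply: connect_sub => a b /sub_adjP [e eE ab]; apply: connect1.
by apply/sub_adjP; exists e => //; apply: (subsetP sE).
Qed.

Lemma connectedb_connect VS ES x y : connectedb VS ES -> x \in VS -> y \in VS ->
  connect (sub_adj ES) x y.
Proof. by case/andP=> _ /forall_inP conn xV yV; move/forall_inP: (conn x xV); apply. Qed.

Lemma connectedb_hub VS ES w : w \in VS ->
  (forall x, x \in VS -> connect (sub_adj ES) x w) -> connectedb VS ES.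
Proof.
move=> wV toW; apply/andP; split; first by apply/set0Pn; exists w.
apply/forall_inP => x xV; apply/forall_inP => y yV.
by apply: connect_trans (toW x xV) _; rewrite connect_sub_adjC; apply: toW.
Qed.

Lemma connect_crossing_edge ES U u v : connect (sub_adj ES) u v -> u \in U -> v \notin U ->
  exists2 e, e \in ES & ((edge_at e).1 \in U) != ((edge_at e).2 \in U).
Proof.
move=> /connectP [p pP ->]; elim: p u pP => [|y p IH] u /=; first by move=> _ ->.
case/andP=> /sub_adjP [e eE ends] pP uU vU.
case yU: (y \in U); first exact: IH pP yU vU.
by exists e => //; case: ends => ->; rewrite /= uU yU.
Qed.

Lemma component_steiner VS ES v0 A : is_subgraph VS ES -> v0 \in VS ->
  (forall a, a \in A -> a \in VS /\ connect (sub_adj ES) v0 a) ->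
  exists2 S, steiner A S & S.2 \subset ES.
Proof.
move=> sub v0V inA.
pose V' := [set x in VS | connect (sub_adj ES) v0 x].
pose E' := [set e in ES | ((edge_at e).1 \in V') && ((edge_at e).2 \in V')].
have edge_in_E' a b : connect (sub_adj ES) v0 a -> sub_adj ES a b -> sub_adj E' a b.
  move=> v0a /sub_adjP [e eE ends]; apply/sub_adjP; exists e => //.
  have /andP [e1 e2] := forall_inP sub e eE.
  have v0b : connect (sub_adj ES) v0 b.
    by apply: connect_trans v0a (connect1 _); apply/sub_adjP; exists e.
  by rewrite !inE eE e1 e2; case: ends => -> /=; rewrite v0a v0b.
have to_v0 y : connect (sub_adj ES) v0 y -> connect (sub_adj E') v0 y.
  move=> /connectP [p pP ->]; elim/last_ind: p pP => [|p b IH] //.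
  rewrite rcons_path last_rcons => /andP [pP ab].
  apply: connect_trans (IH pP) (connect1 (edge_in_E' _ _ _ ab)).
  by apply/connectP; exists p.
exists (V', E'); last by apply/subsetP => e; rewrite inE => /andP [].
apply/and3P; split => /=.
- by apply/forall_inP => e; rewrite inE => /andP [].
- apply: (@connectedb_hub _ _ v0); first by rewrite inE v0V connect0.
  by move=> x; rewrite inE => /andP [_ /to_v0]; rewrite connect_sub_adjC.
- by apply/subsetP => a /inA [aV v0a]; rewrite inE aV.
Qed.

End Connectivity.

Lemma connect_homo (G1 G2 : graph) (f : 'I_(nv G1) -> 'I_(nv G2))
  (E1 : {set eidx G1}) (E2 : {set eidx G2}) x y :
  (forall a b, sub_adj E1 a b -> sub_adj E2 (f a) (f b)) ->
  connect (sub_adj E1) x y -> connect (sub_adj E2) (f x) (f y).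
Proof.
move=> hom /connectP [p pP ->]; elim: p x pP => [|z p IH] x /=; first by rewrite connect0.
by case/andP=> xz pP; apply: connect_trans (connect1 (hom _ _ xz)) (IH _ pP).
Qed.

Section ApexExtension.
Variables (H : graph) (n : nat) (t : 'I_n -> 'I_(nv H)).
Implicit Type A : {set 'I_(nv H)}.

Definition apex : 'I_(nv H).+1 := ord_max.
Definition vlift (v : 'I_(nv H)) : 'I_(nv H).+1 := lift apex v.

(* The edges of [H] come first, followed by one spoke [(t i, apex)] per terminal; [elift],
   [spoke] and [apex_len] go through this numbering with [lshift], [rshift] and [split]. *)
Definition apex_graph : graph := @Graph (nv H).+1
  ([seq (vlift p.1, vlift p.2) | p <- edges H] ++ [seq (vlift (t i), apex) | i <- enum 'I_n]).

Lemma size_apex_edges : size (edges apex_graph) = size (edges H) + n.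
Proof. by rewrite /= size_cat !size_map -enumT size_enum_ord. Qed.

Definition elift (e : eidx H) : eidx apex_graph :=
  cast_ord (esym size_apex_edges) (lshift n e).
Definition spoke (i : 'I_n) : eidx apex_graph :=
  cast_ord (esym size_apex_edges) (rshift _ i).

Lemma vlift_inj : injective vlift. Proof. exact: lift_inj. Qed.
Lemma elift_inj : injective elift. Proof. by move=> e f /cast_ord_inj /lshift_inj. Qed.
Lemma spoke_inj : injective spoke. Proof. by move=> i j /cast_ord_inj /rshift_inj. Qed.
Lemma vlift_neq_apex v : vlift v != apex. Proof. by rewrite eq_sym neq_lift. Qed.
Lemma elift_neq_spoke e i : elift e != spoke i.
Proof. by rewrite (inj_eq (@cast_ord_inj _ _ _)) eq_lrshift. Qed.

Lemma edge_at_elift e : edge_at (elift e) = (vlift (edge_at e).1, vlift (edge_at e).2).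
Proof.
pose d := (apex, apex); rewrite /edge_at !(tnth_nth d) (tnth_nth (edge_at e)) /=.
by rewrite nth_cat size_map ltn_ord (nth_map (edge_at e)).
Qed.

Lemma edge_at_spoke i : edge_at (spoke i) = (vlift (t i), apex).
Proof.
rewrite /edge_at (tnth_nth (apex, apex)) /= nth_cat size_map ltnNge leq_addr addKn /=.
by rewrite (nth_map i) ?size_enum_ord // nth_ord_enum.
Qed.

Lemma apex_edge_cases (e : eidx apex_graph) :
  (exists e0, e = elift e0) \/ (exists i, e = spoke i).
Proof.
rewrite -[e](cast_ordK size_apex_edges).
by case: (split_ordP (cast_ord size_apex_edges e)) => [e0 | i] ->;
  [left; exists e0 | right; exists i].
Qed.

Definition apex_embedding : embedding H apex_graph :=
  @Embedding H apex_graph vlift elift vlift_inj elift_inj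
    (fun e => or_introl (edge_at_elift e)).

Lemma loopless_apex : loopless H -> loopless apex_graph.
Proof.
move=> /allP noloop; rewrite /loopless all_cat !all_map; apply/andP; split.
  by apply/allP => p /noloop /=; rewrite (inj_eq vlift_inj).
by apply/allP => i _ /=; apply: vlift_neq_apex.
Qed.

Definition unlift_verts (VS : {set 'I_(nv apex_graph)}) : {set 'I_(nv H)} :=
  [set v | vlift v \in VS].
Definition unlift_edges (ES : {set eidx apex_graph}) : {set eidx H} :=
  [set e | elift e \in ES].

Lemma is_subgraph_unlift VS ES : is_subgraph VS ES ->
  is_subgraph (unlift_verts VS) (unlift_edges ES).
Proof.
move=> /forall_inP sub; apply/forall_inP => e; rewrite inE => /sub.
by rewrite edge_at_elift !inE.
Qed.

Lemma sub_adj_lift (E0 : {set eidx H}) a b :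
  sub_adj E0 a b -> sub_adj (elift @: E0) (vlift a) (vlift b).
Proof.
case/sub_adjP => e eE ends; apply/sub_adjP; exists (elift e); first exact: imset_f.
by rewrite edge_at_elift; case: ends => ->; [left | right].
Qed.

Lemma sub_adj_unlift (E0 : {set eidx H}) u w :
  sub_adj (elift @: E0) (vlift u) w -> exists2 u', w = vlift u' & sub_adj E0 u u'.
Proof.
case/sub_adjP => _ /imsetP [e eE ->]; rewrite edge_at_elift => -[] /pair_equal_spec [E1 E2].
  exists (edge_at e).2 => //; apply/sub_adjP; exists e => //; left.
  by rewrite -(vlift_inj E1) -surjective_pairing.
exists (edge_at e).1 => //; apply/sub_adjP; exists e => //; right.
by rewrite -(vlift_inj E2) -surjective_pairing.
Qed.

Lemma connect_unlift (E0 : {set eidx H}) x y :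
  connect (sub_adj (elift @: E0)) (vlift x) (vlift y) -> connect (sub_adj E0) x y.
Proof.
move=> /connectP [p pP E]; elim: p x pP E => [|w p IH] x /=; first by move=> _ /vlift_inj ->.
case/andP=> /sub_adj_unlift [u' -> xu'] pP E.
exact: connect_trans (connect1 xu') (IH _ pP E).
Qed.

Lemma steiner_lift A (S : {set 'I_(nv H)} * {set eidx H}) :
  steiner A S -> @steiner apex_graph (vlift @: A) (vlift @: S.1, elift @: S.2).
Proof.
case: S => VS ES /and3P [/forall_inP sub conn AV] /=; apply/and3P; split => /=.
- apply/forall_inP => _ /imsetP [e eE ->]; rewrite edge_at_elift /=.
  by case/andP: (sub e eE) => e1 e2; rewrite !imset_f.
- case/andP: (conn) => /set0Pn [w wV] _; apply: (@connectedb_hub apex_graph _ _ (vlift w)).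
    exact: imset_f.
  move=> _ /imsetP [x xV ->]; apply: (@connect_homo H apex_graph) (@sub_adj_lift _) _.
  exact: connectedb_connect conn xV wV.
- exact: imsetS.
Qed.

Lemma connect_to_apex (ES : {set eidx apex_graph}) a :
  connect (sub_adj ES) (vlift a) apex ->
  exists i, (spoke i \in ES) && connect (sub_adj (unlift_edges ES)) a (t i).
Proof.
move=> /connectP [p pP E]; elim: p a pP E => [|w p IH] a /=.
  by move=> _ /esym/eqP; rewrite (negbTE (vlift_neq_apex a)).
case/andP=> /sub_adjP [e eE ends] pP E.
case: (apex_edge_cases e) => [[e0 ->] | [i ->]] in eE ends *.
  have /sub_adj_unlift [u' wu' au'] : sub_adj (elift @: unlift_edges ES) (vlift a) w.
    by apply/sub_adjP; exists (elift e0) => //; apply: imset_f; rewrite inE.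
  subst w; have [i /andP [iE ci]] := IH _ pP E.
  by exists i; rewrite iE; apply: connect_trans (connect1 au') ci.
rewrite edge_at_spoke in ends; case: ends => /pair_equal_spec [E1 E2].
  by exists i; rewrite eE (vlift_inj E1) connect0.
by move/eqP: E2; rewrite eq_sym (negbTE (vlift_neq_apex a)).
Qed.

Lemma steiner_star :
  @steiner apex_graph (vlift @: (t @: setT)) (apex |: (vlift @: (t @: setT)), spoke @: setT).
Proof.
apply/and3P; split => /=; last exact: subsetUr.
  apply/forall_inP => _ /imsetP [i _ ->]; rewrite edge_at_spoke /=.
  by rewrite setU11 in_setU1 !imset_f ?orbT.
apply: (@connectedb_hub apex_graph _ _ apex); first exact: setU11.
move=> x /setU1P [-> | /imsetP [_ /imsetP [i _ ->] ->]]; first exact: connect0.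
by apply/connect1/sub_adjP; exists (spoke i); [exact: imset_f | left; exact: edge_at_spoke].
Qed.

Section Lengths.
Variables (lH : eidx H -> R) (r : 'I_n -> R).

Definition apex_len (e : eidx apex_graph) : R :=
  match fintype.split (cast_ord size_apex_edges e) with inl e0 => lH e0 | inr i => r i end.

Lemma apex_len_elift e : apex_len (elift e) = lH e.
Proof. by rewrite /apex_len cast_ordKV (unsplitK (inl _ : _ + 'I_n)). Qed.

Lemma apex_len_spoke i : apex_len (spoke i) = r i.
Proof. by rewrite /apex_len cast_ordKV (unsplitK (inr _ : 'I_(size (edges H)) + _)). Qed.

Lemma sub_len_lift (E0 : {set eidx H}) : sub_len apex_len (elift @: E0) = sub_len lH E0.
Proof.
rewrite /sub_len big_imset; last by move=> e f _ _; apply: elift_inj.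
by apply: eq_bigr => e _; rewrite apex_len_elift.
Qed.

Lemma sub_len_apex ES : sub_len apex_len ES =
  (sub_len lH (unlift_edges ES) + \big[Rplus/0%R]_(i in [set i | spoke i \in ES]) r i)%R.
Proof.
have ESE : ES = elift @: unlift_edges ES :|: spoke @: [set i | spoke i \in ES].
  apply/setP => e; apply/idP/setUP => [eE | [] /imsetP [x]]; last 2 first.
  - by rewrite inE => ? ->.
  - by rewrite inE => ? ->.
  by case: (apex_edge_cases e) eE => [[x ->] | [x ->]] xE; [left | right]; rewrite imset_f ?inE.
have disj : [disjoint elift @: unlift_edges ES & spoke @: [set i | spoke i \in ES]].
  rewrite -setI_eq0; apply/eqP/setP => e; rewrite !inE.
  by apply/andP => -[/imsetP [e0 _ ->] /imsetP [i _ /eqP]]; rewrite (negbTE (elift_neq_spoke _ _)).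
rewrite -sub_len_lift /sub_len {1}ESE sumR_setU_disjoint //; congr (_ + _)%R.
rewrite big_imset /=; last by move=> i j _ _; apply: spoke_inj.
by apply: eq_bigr => i _; rewrite apex_len_spoke.
Qed.

Lemma sd_apex_star : exists2 d, sd apex_len (vlift @: (t @: setT)) = Some d &
  (d <= \big[Rplus/0%R]_(i in [set: 'I_n]) r i)%R.
Proof.
have [d -> le_d] := sd_le_steiner apex_len steiner_star; exists d => //.
rewrite /sub_len /= big_imset /= in le_d; last by move=> i j _ _; apply: spoke_inj.
by rewrite (eq_bigr r) in le_d => // i _; rewrite apex_len_spoke.
Qed.

Lemma apex_len_pos : (forall e, 0 < lH e)%R -> (forall i, 0 < r i)%R ->
  forall e, (0 < apex_len e)%R.
Proof.
move=> lH_pos r_pos e.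
by case: (apex_edge_cases e) => [[e0 ->] | [i ->]]; rewrite ?apex_len_elift ?apex_len_spoke.
Qed.

Hypotheses (lH_ge0 : forall e, (0 <= lH e)%R) (r_ge0 : forall i, (0 <= r i)%R).

Lemma sub_len_unlift_le ES : (sub_len lH (unlift_edges ES) <= sub_len apex_len ES)%R.
Proof.
rewrite sub_len_apex.
suff : (0 <= \big[Rplus/0%R]_(i in [set i | spoke i \in ES]) r i)%R by lra.
by apply: sumR_ge0 => i _; apply: r_ge0.
Qed.

Lemma steiner_unlift_avoiding A S : @steiner apex_graph (vlift @: A) S -> apex \notin S.1 ->
  exists2 S', steiner A S' & (sub_len lH S'.2 <= sub_len apex_len S.2)%R.
Proof.
case: S => VS ES /and3P [sub conn AV] /= zV.
have ES_lift : ES \subset elift @: unlift_edges ES.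
  apply/subsetP => e eE; case: (apex_edge_cases e) => [[e0 E] | [i E]]; subst e.
    by rewrite imset_f ?inE.
  by case/andP: (forall_inP sub _ eE); rewrite edge_at_spoke (negbTE zV).
have [w wV] : exists w, vlift w \in VS.
  case/andP: (conn) => /set0Pn [w wV] _.
  have aw : apex != w by apply: contraNneq zV => ->.
  by have [w' E _] := unlift_some aw; exists w'; rewrite /vlift -E.
exists (unlift_verts VS, unlift_edges ES); last exact: sub_len_unlift_le.
apply/and3P; split => /=; first exact: is_subgraph_unlift.
  apply: (@connectedb_hub H _ _ w); first by rewrite inE.
  move=> x; rewrite inE => xV; apply: connect_unlift.
  exact: sub_adj_connect_mono ES_lift (connectedb_connect conn xV wV).
by apply/subsetP => a aA; rewrite inE (subsetP AV) ?imset_f.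
Qed.

Section ShortTerminalSets.
Variable k : nat.
Hypothesis short_steiner : forall N : {set 'I_n}, N != set0 -> #|N| <= k ->
  exists2 S, steiner (t @: N) S & (sub_len lH S.2 <= \big[Rplus/0%R]_(i in N) r i)%R.

Lemma steiner_unlift_through_apex A S : #|A| <= k -> A != set0 ->
  @steiner apex_graph (vlift @: A) S -> apex \in S.1 ->
  exists2 S', steiner A S' & (sub_len lH S'.2 <= sub_len apex_len S.2)%R.
Proof.
case: S => VS ES Ak /set0Pn [a0 a0A] /and3P [sub conn AV] /= zV.
have reach a : a \in A ->
    exists i, (spoke i \in ES) && connect (sub_adj (unlift_edges ES)) a (t i).
  by move=> aA; apply/connect_to_apex/(connectedb_connect conn _ zV)/(subsetP AV)/imset_f.
have [i0 _] := reach a0 a0A.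
pose sel a := odflt i0 [pick i | (spoke i \in ES) && connect (sub_adj (unlift_edges ES)) a (t i)].
have selP a : a \in A ->
    (spoke (sel a) \in ES) && connect (sub_adj (unlift_edges ES)) a (t (sel a)).
  by move=> /reach [i Pi]; rewrite /sel; case: pickP => [//|none]; rewrite none in Pi.
have N0 : sel @: A != set0 by apply/set0Pn; exists (sel a0); apply: imset_f.
have Nk : #|sel @: A| <= k by apply: leq_trans (leq_imset_card _ _) Ak.
have [[VQ EQ] /and3P [subQ connQ tNQ] lenQ] := short_steiner N0 Nk.
have tQ a : a \in A -> t (sel a) \in VQ.
  by move=> aA; apply: (subsetP tNQ); rewrite !imset_f.
have inA a : a \in A ->
    a \in unlift_verts VS :|: VQ /\ connect (sub_adj (unlift_edges ES :|: EQ)) (t (sel a0)) a.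
  move=> aA; split; first by rewrite !inE (subsetP AV) ?imset_f.
  apply: (@connect_trans _ _ (t (sel a))).
    exact/(sub_adj_connect_mono (subsetUr _ _))/(connectedb_connect connQ)/tQ/aA/tQ/a0A.
  rewrite connect_sub_adjC; apply: sub_adj_connect_mono (subsetUl _ _) _.
  by case/andP: (selP a aA).
have v0Q : t (sel a0) \in unlift_verts VS :|: VQ by rewrite inE tQ ?orbT.
have [S' stS' sub'] := component_steiner
  (is_subgraph_setU (is_subgraph_unlift sub) subQ) v0Q inA.
have le_r : (\big[Rplus/0%R]_(i in sel @: A) r i <=
              \big[Rplus/0%R]_(i in [set i | spoke i \in ES]) r i)%R.
  apply: sumR_subset r_ge0; apply/subsetP => _ /imsetP [a aA ->]; rewrite inE.
  by case/andP: (selP a aA).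
exists S' => //.
apply: Rle_trans (sumR_subset sub' lH_ge0) _.
apply: Rle_trans (sumR_setU_le _ _ lH_ge0) _.
change (sub_len lH (unlift_edges ES) + sub_len lH EQ <= sub_len apex_len ES)%R.
change (sub_len lH EQ <= \big[Rplus/0%R]_(i in sel @: A) r i)%R in lenQ.
rewrite sub_len_apex; lra.
Qed.

(* [v0] only witnesses that [H] has a vertex, which the case [A = set0] needs. *)
Lemma apex_k_geodesic (v0 : 'I_(nv H)) : k_geodesic apex_embedding apex_len k.
Proof.
move=> A Ak; rewrite (eq_sd_len _ apex_len_elift) /=.
apply: eq_sd => [S stS | S stS].
  exists (vlift @: S.1, elift @: S.2); first exact: steiner_lift.
  by rewrite sub_len_lift; apply: Rle_refl.
have [A0 | An0] := eqVneq A set0.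
  exists ([set v0], set0); first by rewrite A0; apply: steiner_set0.
  rewrite /sub_len big_set0; apply: sumR_ge0 => e _.
  by case: (apex_edge_cases e) => [[e0 ->] | [i ->]]; rewrite ?apex_len_elift ?apex_len_spoke.
case: (boolP (apex \in S.1)) => zV.
  exact: steiner_unlift_through_apex.
exact: steiner_unlift_avoiding.
Qed.

End ShortTerminalSets.

End Lengths.
End ApexExtension.

Definition joins (G : graph) (X Y : {set 'I_(nv G)}) (e : eidx G) : bool :=
  ((edge_at e).1 \in X) && ((edge_at e).2 \in Y) ||
  ((edge_at e).1 \in Y) && ((edge_at e).2 \in X).

Section K2Minor.
Variables (k : nat) (H : graph).
Hypotheses (k_ge2 : 2 <= k) (loopH : loopless H).

Fact leaf_widen : k.+1 <= k + 2. Proof. by rewrite addn2. Qed.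

Definition leaf (i : 'I_k.+1) : ('I_2 + 'I_(k + 2))%type := inr (widen_ord leaf_widen i).
Definition hub0 : 'I_2 := ord0.
Definition hub1 : 'I_2 := ord_max.
Definition leaf0 : 'I_k.+1 := ord0.

Variable B : ('I_2 + 'I_(k + 2))%type -> {set 'I_(nv H)}.
Hypotheses (B_conn : forall x, connectedb (B x) (induced_edges (B x)))
           (B_disj : forall x y, x != y -> [disjoint B x & B y]).
Variable c : 'I_2 -> 'I_k.+1 -> eidx H.
Hypothesis c_joins : forall h i, joins (B (inl h)) (B (leaf i)) (c h i).
Variable t : 'I_k.+1 -> 'I_(nv H).
Hypothesis t_in : forall i, t i \in B (leaf i).
Implicit Type T : {set 'I_k.+1}.

Lemma leaf_inj : injective leaf.
Proof. by move=> i j [E]; apply: val_inj. Qed.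

Lemma hub_cases h : h = hub0 \/ h = hub1.
Proof. by case: h => -[|[|//]] ?; [left | right]; apply: val_inj. Qed.

Lemma mem_branch_uniq v x y : v \in B x -> v \in B y -> x = y.
Proof.
move=> vx vy; apply/eqP/negPn/negP => /B_disj /disjointFr /(_ vx).
by rewrite vy.
Qed.

Lemma mem_bigcup_branch (Xs : {set ('I_2 + 'I_(k + 2))%type}) v z : v \in B z ->
  (v \in \bigcup_(x in Xs) B x) = (z \in Xs).
Proof.
move=> vz; apply/bigcupP/idP => [[x xX vx] | zX]; last by exists z.
by rewrite (mem_branch_uniq vz vx).
Qed.

Lemma joins_branch_uniq x y x' y' e : joins (B x) (B y) e -> joins (B x') (B y') e ->
  (x = x' /\ y = y') \/ (x = y' /\ y = x').
Proof.
by rewrite /joins => /orP [] /andP [a b] /orP [] /andP [a' b'];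
  [left | right | right | left]; split; apply: mem_branch_uniq; eassumption.
Qed.

Lemma joins_crossing (Xs : {set ('I_2 + 'I_(k + 2))%type}) x y e :
  joins (B x) (B y) e ->
  ((edge_at e).1 \in \bigcup_(z in Xs) B z) != ((edge_at e).2 \in \bigcup_(z in Xs) B z) ->
  (x \in Xs) != (y \in Xs).
Proof.
by case/orP => /andP [a b]; rewrite !(mem_bigcup_branch _ a) !(mem_bigcup_branch _ b) // eq_sym.
Qed.

Lemma connector_inj h i h' j : c h i = c h' j -> h = h' /\ i = j.
Proof.
move=> E; have := c_joins h' j; rewrite -E.
by case/(joins_branch_uniq (c_joins h i)) => -[// [->] /leaf_inj].
Qed.

Lemma connector_notin_induced h i x : c h i \notin induced_edges (B x).
Proof.
apply/negP; rewrite inE => /andP [a b].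
by case/orP: (c_joins h i) => /andP [a' b'];
  move: (mem_branch_uniq a a') (mem_branch_uniq b b') => ->.
Qed.

Definition kR : R := INR k.
(* Small enough that all the edges inside branch sets together cost less than 1. *)
Definition eps : R := (/ (INR #|eidx H| + 1))%R.
Definition heavy : R := (3 * kR * kR + 3 * kR + 1)%R.

Definition ell (e : eidx H) : R :=
  if e == c hub0 leaf0 then 1%R
  else if [exists i, (i != leaf0) && (e == c hub0 i)] then (3 * kR + 3)%R
  else if [exists i, (i != leaf0) && (e == c hub1 i)] then (3 * kR)%R
  else if [exists x, e \in induced_edges (B x)] then eps
  else heavy.

Definition spoke_len (i : 'I_k.+1) : R := if i == leaf0 then (2 * kR)%R else (3 * kR + 1)%R.

Lemma kR_ge2 : (2 <= kR)%R.
Proof. exact/(le_INR 2)/leP. Qed.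

Lemma eps_pos : (0 < eps)%R.
Proof. by apply: Rinv_0_lt_compat; have := pos_INR #|eidx H|; lra. Qed.

Lemma ell_c00 : ell (c hub0 leaf0) = 1%R.
Proof. by rewrite /ell eqxx. Qed.

Lemma ell_c0 i : i != leaf0 -> ell (c hub0 i) = (3 * kR + 3)%R.
Proof.
move=> i0; rewrite /ell; case: eqP => [/connector_inj [_ E] | _].
  by rewrite E eqxx in i0.
by case: existsP => // -[]; exists i; rewrite i0 eqxx.
Qed.

Lemma ell_c1 i : i != leaf0 -> ell (c hub1 i) = (3 * kR)%R.
Proof.
move=> i0; rewrite /ell; case: eqP => [/connector_inj [] // | _].
case: existsP => [[j /andP [_ /eqP /connector_inj []]] // | _].
by case: existsP => // -[]; exists i; rewrite i0 eqxx.
Qed.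

Lemma ell_induced x e : e \in induced_edges (B x) -> ell e = eps.
Proof.
move=> ex; have notc h i : e = c h i -> False.
  by move=> E; move: (connector_notin_induced h i x); rewrite -E ex.
rewrite /ell; case: eqP => [/notc // | _].
case: existsP => [[j /andP [_ /eqP /notc]] // | _].
case: existsP => [[j /andP [_ /eqP /notc]] // | _].
by case: existsP => // -[]; exists x.
Qed.

Lemma ell_cases e : ell e = heavy \/ e = c hub0 leaf0 \/
  (exists2 i, i != leaf0 & e = c hub0 i) \/ (exists2 i, i != leaf0 & e = c hub1 i) \/
  (exists x, e \in induced_edges (B x)).
Proof.
rewrite /ell; case: eqP => [|_]; first tauto.
case: existsP => [[i /andP [i0 /eqP E]] | _]; first by do 2 right; left; exists i.
case: existsP => [[i /andP [i0 /eqP E]] | _]; first by do 3 right; left; exists i.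
by case: existsP => [[x ex] | _]; [do 4 right; exists x | left].
Qed.

Lemma ell_pos e : (0 < ell e)%R.
Proof.
have := kR_ge2; have := eps_pos; rewrite /ell /heavy => *.
by repeat case: ifP => _; nra.
Qed.

Lemma ell_ge0 e : (0 <= ell e)%R.
Proof. exact/Rlt_le/ell_pos. Qed.

Lemma spoke_len_pos i : (0 < spoke_len i)%R.
Proof. by have := kR_ge2; rewrite /spoke_len; case: ifP => _; lra. Qed.

Lemma sub_len_induced_lt1 (E : {set eidx H}) : E \subset \bigcup_x induced_edges (B x) ->
  (sub_len ell E < 1)%R.
Proof.
move=> sE; rewrite /sub_len (eq_bigr (fun _ => eps)); last first.
  by move=> e /(subsetP sE) /bigcupP [x _ /ell_induced].
rewrite sumR_const /eps; have := pos_INR #|eidx H|.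
have : (INR #|E| <= INR #|eidx H|)%R by apply/le_INR/leP/max_card.
set m := INR #|eidx H| => le_E m0.
apply: (Rmult_lt_reg_r (m + 1)); first lra.
by rewrite Rmult_assoc Rinv_l; lra.
Qed.

Definition hub_star h (T : {set 'I_k.+1}) : {set 'I_(nv H)} * {set eidx H} :=
  (\bigcup_(x in inl h |: leaf @: T) B x,
   \bigcup_(x in inl h |: leaf @: T) induced_edges (B x) :|: c h @: T).

Lemma steiner_hub_star h T : steiner (t @: T) (hub_star h T).
Proof.
set Xs := inl h |: leaf @: T.
have hX : inl h \in Xs by rewrite !inE eqxx.
have lX i : i \in T -> leaf i \in Xs by move=> iT; rewrite !inE imset_f ?orbT.
have inV v x : v \in B x -> x \in Xs -> v \in (hub_star h T).1.
  by move=> vx xX; apply/bigcupP; exists x.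
have [w0 w0h] : exists w0, w0 \in B (inl h).
  by case/andP: (B_conn (inl h)) => /set0Pn.
have conn_in x a b : x \in Xs -> a \in B x -> b \in B x ->
    connect (sub_adj (hub_star h T).2) a b.
  move=> xX aB bB; apply: sub_adj_connect_mono (connectedb_connect (B_conn x) aB bB).
  by apply/subsetP => e ex; rewrite !inE; apply/orP; left; apply/bigcupP; exists x.
apply/and3P; split.
- apply/forall_inP => e; case/setUP => [/bigcupP [x xX] | /imsetP [i iT ->]].
    by rewrite inE => /andP [a b]; rewrite !(inV _ x).
  by case/orP: (c_joins h i) => /andP [a b]; rewrite (inV _ _ a) ?(inV _ _ b) ?lX.
- apply: (@connectedb_hub H _ _ w0 (inV _ _ w0h hX)) => v /bigcupP [x].
  case/setU1P => [-> vh | /imsetP [i iT ->] vi]; first exact: conn_in hX vh w0h.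
  have ci : c h i \in (hub_star h T).2 by rewrite !inE imset_f ?orbT.
  rewrite connect_sub_adjC; case/orP: (c_joins h i) => /andP [a b].
  + apply: connect_trans (conn_in _ _ _ hX w0h a) _.
    apply: connect_trans (connect1 _) (conn_in _ _ _ (lX _ iT) b vi).
    by apply/sub_adjP; exists (c h i) => //; left; rewrite -surjective_pairing.
  + apply: connect_trans (conn_in _ _ _ hX w0h b) _.
    apply: connect_trans (connect1 _) (conn_in _ _ _ (lX _ iT) a vi).
    by apply/sub_adjP; exists (c h i) => //; right; rewrite -surjective_pairing.
- by apply/subsetP => _ /imsetP [i iT ->]; apply: inV (t_in i) (lX i iT).
Qed.

Lemma sub_len_hub_star h T :
  (sub_len ell (hub_star h T).2 < 1 + \big[Rplus/0%R]_(i in T) ell (c h i))%R.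
Proof.
apply: Rle_lt_trans (sumR_setU_le _ _ ell_ge0) _.
rewrite big_imset /=; last by move=> i j _ _ /connector_inj [].
suff : (\big[Rplus/0%R]_(e in \bigcup_(x in inl h |: leaf @: T) induced_edges (B x)) ell e < 1)%R.
  exact: Rplus_lt_compat_r.
apply: sub_len_induced_lt1; apply/subsetP => e /bigcupP [x _ ex].
by apply/bigcupP; exists x.
Qed.

Lemma short_hub_star T : T != set0 -> #|T| <= k ->
  exists2 S, steiner (t @: T) S &
    (sub_len ell S.2 <= \big[Rplus/0%R]_(i in T) spoke_len i)%R.
Proof.
move=> T0 Tk; have kR2 := kR_ge2.
have spoke_off i : i != leaf0 -> spoke_len i = (3 * kR + 1)%R.
  by rewrite /spoke_len => /negbTE ->.
case: (boolP (leaf0 \in T)) => T_leaf0.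
  exists (hub_star hub0 T); first exact: steiner_hub_star.
  have := sub_len_hub_star hub0 T; rewrite !(big_setD1 _ T_leaf0) /= ell_c00.
  set T' := T :\ leaf0; have off i : i \in T' -> i != leaf0 by rewrite !inE => /andP [].
  have -> : \big[Rplus/0%R]_(i in T') ell (c hub0 i) = (INR #|T'| * (3 * kR + 3))%R.
    by rewrite -sumR_const; apply: eq_bigr => i /off; apply: ell_c0.
  have -> : \big[Rplus/0%R]_(i in T') spoke_len i = (INR #|T'| * (3 * kR + 1))%R.
    by rewrite -sumR_const; apply: eq_bigr => i /off; apply: spoke_off.
  have : (INR #|T'| + 1 <= kR)%R.
    by rewrite -S_INR; apply/le_INR/leP; move: Tk; rewrite (cardsD1 leaf0) T_leaf0.
  by rewrite /spoke_len eqxx; have := pos_INR #|T'|; lra.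
exists (hub_star hub1 T); first exact: steiner_hub_star.
have off i : i \in T -> i != leaf0 by apply: contraTneq => ->.
have := sub_len_hub_star hub1 T.
have -> : \big[Rplus/0%R]_(i in T) ell (c hub1 i) = (INR #|T| * (3 * kR))%R.
  by rewrite -sumR_const; apply: eq_bigr => i /off; apply: ell_c1.
have -> : \big[Rplus/0%R]_(i in T) spoke_len i = (INR #|T| * (3 * kR + 1))%R.
  by rewrite -sumR_const; apply: eq_bigr => i /off; apply: spoke_off.
have : (1 <= INR #|T|)%R by apply/(le_INR 1)/leP; rewrite card_gt0.
lra.
Qed.

Lemma eq_inl_leaf h i : (inl h == leaf i) = false.
Proof. by []. Qed.

Lemma inl_notin_leaves h T : inl h \notin leaf @: T.
Proof. by apply/imsetP => -[]. Qed.

Lemma light_crossing (Xs : {set ('I_2 + 'I_(k + 2))%type}) e : ell e <> heavy ->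
  ((edge_at e).1 \in \bigcup_(x in Xs) B x) != ((edge_at e).2 \in \bigcup_(x in Xs) B x) ->
  exists h i, [/\ e = c h i, h = hub0 \/ i != leaf0 & (inl h \in Xs) != (leaf i \in Xs)].
Proof.
move=> light cross.
have crossing h i : e = c h i -> (inl h \in Xs) != (leaf i \in Xs).
  by move=> E; subst e; apply: joins_crossing (c_joins h i) cross.
case: (ell_cases e) => [// | [E | [[i i0 E] | [[i i0 E] | [x]]]]].
- by exists hub0, leaf0; split; [| left | apply: crossing].
- by exists hub0, i; split; [| left | apply: crossing].
- by exists hub1, i; split; [| right | apply: crossing].
- rewrite inE => /andP [a b].
  by move: cross; rewrite !(mem_bigcup_branch _ a) !(mem_bigcup_branch _ b) eqxx.
Qed.

Section LowerBound.
Variables (VS : {set 'I_(nv H)}) (ES : {set eidx H}).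
Hypotheses (st : steiner (t @: setT) (VS, ES)) (light : forall e, e \in ES -> ell e <> heavy).

Definition attached0 : {set 'I_k.+1} := [set i | c hub0 i \in ES].
Definition attached1 : {set 'I_k.+1} := [set i | (i != leaf0) && (c hub1 i \in ES)].

Lemma terminal_in i : t i \in VS.
Proof. by case/and3P: st => _ _ /subsetP; apply; rewrite imset_f. Qed.

(* For every leaf [i], a cut around its branch set. *)
Lemma attached_cover : attached0 :|: attached1 = setT.
Proof.
apply/setP => i; rewrite !inE; case/and3P: st => _ conn _.
have [j ji] : exists j : 'I_k.+1, j != i.
  case: (eqVneq i leaf0) => [-> | ?]; last by exists leaf0; rewrite eq_sym.
  by exists ord_max; rewrite -val_eqE /= -lt0n ltnW.
pose U := \bigcup_(x in [set leaf i]) B x.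
have tiU : t i \in U by rewrite (mem_bigcup_branch _ (t_in i)) set11.
have tjU : t j \notin U.
  by rewrite (mem_bigcup_branch _ (t_in j)) in_set1 (inj_eq leaf_inj).
have [e eE cross] := connect_crossing_edge
  (connectedb_connect conn (terminal_in i) (terminal_in j)) tiU tjU.
have [h [i' [E hi' X]]] := light_crossing (light eE) cross; subst e.
have /eqP i'i : i' == i.
  by move: X; rewrite !inE (inj_eq leaf_inj) eq_inl_leaf; case: (i' == i).
subst i'; move: eE => /= eE; case: (hub_cases h) => ?; subst h; first by rewrite eE.
case: hi' => [E | ->]; last by rewrite eE orbT.
by move: E => /eqP.
Qed.

Lemma leaf0_attached0 : leaf0 \in attached0.
Proof. by have /setP /(_ leaf0) := attached_cover; rewrite !inE eqxx orbF. Qed.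

(* Cut separating hub 0 and the leaves attached to it from hub 1, which carries the
   connector of a leaf [i0] not attached to hub 0. *)
Lemma attached_twice : attached0 != setT -> attached0 :&: attached1 != set0.
Proof.
case/and3P: st => /forall_inP sub conn _ not_full.
have [i0 i0E] : exists i0, c hub0 i0 \notin ES.
  apply/existsP; apply: contraNT not_full => /existsPn all0.
  by apply/eqP/setP => i; rewrite !inE; apply/negPn/all0.
have c1E : c hub1 i0 \in ES.
  by have /setP /(_ i0) := attached_cover; rewrite !inE (negbTE i0E) => /andP [].
have [u uV uh] : exists2 u, u \in VS & u \in B (inl hub1).
  case/andP: (sub _ c1E) => e1 e2; case/orP: (c_joins hub1 i0) => /andP [? ?].
    by exists (edge_at (c hub1 i0)).1.
  by exists (edge_at (c hub1 i0)).2.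
pose Xs := inl hub0 |: leaf @: attached0.
have leaf_Xs i : (leaf i \in Xs) = (c hub0 i \in ES).
  by rewrite !inE /= (mem_imset _ _ leaf_inj) inE.
have tU : t leaf0 \in \bigcup_(x in Xs) B x.
  by rewrite (mem_bigcup_branch _ (t_in leaf0)) leaf_Xs; have := leaf0_attached0; rewrite inE.
have uU : u \notin \bigcup_(x in Xs) B x.
  by rewrite (mem_bigcup_branch _ uh) !inE (negbTE (inl_notin_leaves _ _)).
have [e eE cross] := connect_crossing_edge
  (connectedb_connect conn (terminal_in leaf0) uV) tU uU.
have [h [i [E hi X]]] := light_crossing (light eE) cross; subst e.
rewrite leaf_Xs !inE (negbTE (inl_notin_leaves _ _)) orbF in X.
move: eE => /= eE; case: (hub_cases h) => ?; subst h.
  by move: X; rewrite eqxx eE.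
have i_leaf0 : i != leaf0 by case: hi => // E; move: E => /eqP.
apply/set0Pn; exists i; rewrite !inE eE i_leaf0 andbT.
by move: X; case: (c hub0 i \in ES).
Qed.

Lemma sub_len_attached :
  (1 + INR #|attached0 :\ leaf0| * (3 * kR + 3) + INR #|attached1| * (3 * kR)
     <= sub_len ell ES)%R.
Proof.
have sub : c hub0 @: attached0 :|: c hub1 @: attached1 \subset ES.
  apply/subsetP => e /setUP [] /imsetP [i]; rewrite inE; first by move=> ? ->.
  by case/andP => _ ? ->.
have disj : [disjoint c hub0 @: attached0 & c hub1 @: attached1].
  rewrite -setI_eq0; apply/eqP/setP => e; rewrite !inE.
  by apply/andP => -[/imsetP [i _ ->] /imsetP [j _ /connector_inj []]].
apply: Rle_trans (sumR_subset sub ell_ge0); rewrite sumR_setU_disjoint //.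
rewrite !big_imset /=; try by move=> i j _ _ /connector_inj [].
rewrite (big_setD1 _ leaf0_attached0) /= ell_c00 -!sumR_const.
apply: Rplus_le_compat; first apply: Rplus_le_compat_l.
  by apply/Req_le/eq_bigr => i; rewrite !inE => /andP [/ell_c0 ->].
by apply/Req_le/eq_bigr => i; rewrite !inE => /andP [/ell_c1 ->].
Qed.

Lemma heavy_le_light : (heavy <= sub_len ell ES)%R.
Proof.
have := sub_len_attached; have := kR_ge2; rewrite /heavy.
have := pos_INR #|attached1|; have := pos_INR #|attached0 :\ leaf0|.
have card0 : #|attached0| = (#|attached0 :\ leaf0|).+1.
  by rewrite (cardsD1 leaf0) leaf0_attached0.
case: (eqVneq attached0 setT) => [full | /attached_twice both].
  have -> : #|attached0 :\ leaf0| = k.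
    by apply: succn_inj; rewrite -card0 full cardsT card_ord.
  by rewrite -/kR; nra.
have : k < #|attached0 :\ leaf0| + #|attached1|.
  have := cardsUI attached0 attached1; rewrite attached_cover cardsT card_ord card0.
  by rewrite -card_gt0 in both; lia.
by move=> /leP /le_INR; rewrite plus_INR S_INR -/kR; nra.
Qed.

End LowerBound.

Lemma heavy_le_steiner S : steiner (t @: setT) S -> (heavy <= sub_len ell S.2)%R.
Proof.
case: S => VS ES st /=.
case: (classic (exists2 e, e \in ES & ell e = heavy)) => [[e eE <-] | no_heavy].
  exact: sumR_ge_term eE ell_ge0.
by apply: (heavy_le_light st) => e eE E; apply: no_heavy; exists e.
Qed.

Lemma sum_spoke_len :
  \big[Rplus/0%R]_(i in [set: 'I_k.+1]) spoke_len i = (3 * kR * kR + 3 * kR)%R.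
Proof.
rewrite (big_setD1 _ (in_setT leaf0)) /= {1}/spoke_len eqxx.
rewrite (eq_bigr (fun _ => 3 * kR + 1)%R); last first.
  by move=> i; rewrite !inE andbT /spoke_len => /negbTE ->.
have : #|[set: 'I_k.+1] :\ leaf0| = k.
  by have := cardsD1 leaf0 [set: 'I_k.+1]; rewrite in_setT cardsT card_ord add1n => -[].
by rewrite sumR_const => ->; rewrite -/kR; lra.
Qed.

Lemma K2_minor_not_in_Hk : ~ in_Hk k H.
Proof.
move=> HkH.
have geo := apex_k_geodesic ell_ge0 (fun i => Rlt_le _ _ (spoke_len_pos i))
  short_hub_star (t leaf0).
have full := HkH _ _ _ (loopless_apex t loopH) (apex_len_pos ell_pos spoke_len_pos) geo.
have card_t : #|t @: setT| <= k.+1.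
  by apply: leq_trans (leq_imset_card _ _) _; rewrite cardsT card_ord.
have := full k.+1 (t @: setT) card_t.
rewrite (eq_sd_len _ (apex_len_elift t ell spoke_len)).
have [d -> le_d] := sd_apex_star t ell spoke_len.
move=> /sd_attained [S st dE].
have := heavy_le_steiner st; rewrite -dE sum_spoke_len /heavy in le_d *; lra.
Qed.

End K2Minor.

Theorem corollary6p8 (k : nat) (H : graph) :
  2 <= k -> loopless H -> in_Hk k H -> ~ has_minor (@K2_adj (k + 2)) H.
Proof.
move=> k_ge2 loopH HkH [B [B_conn [B_disj B_adj]]].
have connector h i : exists e, joins (B (inl h)) (B (leaf i)) e.
  have [e ends] := B_adj (inl h) (leaf i) isT.
  by exists e; rewrite /joins; case: ends => -[-> ->]; rewrite ?orbT.
have terminal i : exists v, v \in B (leaf i).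
  by case/andP: (B_conn (leaf i)) => /set0Pn.
exact: (K2_minor_not_in_Hk k_ge2 loopH B_conn B_disj
  (fun h i => xchooseP (connector h i)) (fun i => xchooseP (terminal i)) HkH).
Qed.
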